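(* Let $(X,d)$ be a complete non-trivial quasi-metric space ($d(x,y)\ge0$, $d(x,y)=0\iff x=y$, $d(x,y)=d(y,x)$) such that there is a constant $K\in[1,\infty)$ with the quadrilateral inequality $d(x,y)\le K[d(x,z)+d(z,v)+d(v,y)]$ for all $x,y,z,v\in X$. Let $f:X\to X$ satisfy $d(f(x),f(y))\le\alpha\,d(x,y)$ for all $x,y\in X$, with a constant $\alpha\in(0,1)$ such that $\alpha<1/K$. Then $f$ has a unique fixed point $x^*\in X$; for every $x_0\in X$ the iterates $x_{n+1}=f(x_n)$, $n=0,1,2,\dots$, converge to $x^*$, and $$d(x^*,x_n)\le\frac{K\alpha^n}{1-\alpha K}\,d(x_0,x_1)\quad\text{for all } n.$$ *)

From Stdlib Require Export Reals.
Open Scope R_scope.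

Definition qm_converges {X : Type} (d : X -> X -> R) (u : nat -> X) (x : X) : Prop :=
  forall eps : R, 0 < eps -> exists N : nat, forall n : nat, (N <= n)%nat -> d (u n) x < eps.

Definition qm_cauchy {X : Type} (d : X -> X -> R) (u : nat -> X) : Prop :=
  forall eps : R, 0 < eps -> exists N : nat, forall m n : nat,
    (N <= m)%nat -> (N <= n)%nat -> d (u m) (u n) < eps.

Definition qm_complete {X : Type} (d : X -> X -> R) : Prop :=
  forall u : nat -> X, qm_cauchy d u -> exists x : X, qm_converges d u x.

(* The Picard iterates x_n = f^n x_0 satisfy d(x_n, x_{n+1}) <= alpha^n d(x_0, x_1).  Splitting
   d(x_n, x_{n+k+1}) at x_{n+1} with the relaxed triangle inequality d(x,y) <= K (d(x,z) + d(z,y))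
   shows by induction on k that d(x_n, x_{n+k}) <= B alpha^n, where B = K d(x_0,x_1) / (1 - alpha K)
   is the fixed point of B = K (d(x_0,x_1) + alpha B); this is where alpha K < 1 is needed.  So the
   iterates are Cauchy, and their limit p is a fixed point.  For the a priori estimate, one use of
   the quadrilateral inequality through x_{n+1} and a far iterate x_m (two triangle inequalities
   would cost K^2) gives
     d(x_n, p) <= K (alpha^n d(x_0,x_1) + B alpha^{n+1} + d(x_m, p)) = B alpha^n + K d(x_m, p),
   and the last term vanishes as m grows. *)
From Stdlib Require Import Reals.
From Stdlib Require Import Lra Lia.
Open Scope R_scope.

Lemma pow_mult_eventually_lt (a B eps : R) : 0 <= a < 1 -> 0 <= B -> 0 < eps ->
  exists N, forall m, (N <= m)%nat -> B * a ^ m < eps.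
Proof.
  intros Ha HB He.
  destruct (pow_lt_1_zero a ltac:(rewrite Rabs_right; lra) (eps / (B + 1))
              ltac:(apply Rdiv_lt_0_compat; lra)) as [N HN].
  exists N; intros m Hm.
  specialize (HN m ltac:(lia)).
  rewrite Rabs_right in HN by (apply Rle_ge, pow_le; lra).
  assert (0 <= a ^ m) by (apply pow_le; lra).
  apply Rmult_lt_compat_r with (r := B + 1) in HN; [|lra].
  unfold Rdiv in HN; rewrite Rmult_assoc, Rinv_l, Rmult_1_r in HN by lra.
  nra.
Qed.

Section QuasiMetric.

Variables (X : Type) (d : X -> X -> R) (K : R).
Hypothesis d_nonneg : forall x y : X, 0 <= d x y.
Hypothesis d_zero : forall x y : X, d x y = 0 <-> x = y.
Hypothesis d_sym : forall x y : X, d x y = d y x.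
Hypothesis K_ge1 : 1 <= K.
Hypothesis d_quad : forall x y z v : X, d x y <= K * (d x z + d z v + d v y).
Hypothesis d_complete : qm_complete d.

Lemma dist_refl (x : X) : d x x = 0.
Proof. now apply d_zero. Qed.

Lemma dist_tri (x y z : X) : d x y <= K * (d x z + d z y).
Proof. specialize (d_quad x y z z); rewrite dist_refl in d_quad; lra. Qed.

Section Contraction.

Variables (alpha : R) (f : X -> X).
Hypothesis alpha_pos : 0 < alpha.
Hypothesis alphaK_lt1 : alpha * K < 1.
Hypothesis f_contraction : forall x y : X, d (f x) (f y) <= alpha * d x y.

Lemma alpha_lt1 : alpha < 1.
Proof. nra. Qed.

Lemma contraction_fixpoint_unique (y z : X) : f y = y -> f z = z -> y = z.
Proof.
  intros Hy Hz; apply d_zero.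
  specialize (f_contraction y z); rewrite Hy, Hz in f_contraction.
  specialize (d_nonneg y z); pose proof alpha_lt1; nra.
Qed.

Variable x0 : X.

Let it (n : nat) : X := Nat.iter n f x0.
Let a : R := d x0 (f x0).
Let B : R := K * a / (1 - alpha * K).

Lemma iter_bound_nonneg : 0 <= B.
Proof.
  assert (0 <= a) by apply d_nonneg.
  unfold B; apply Rmult_le_pos; [nra|]; apply Rlt_le, Rinv_0_lt_compat; lra.
Qed.

Lemma iter_bound_fixpoint : K * a + K * alpha * B = B.
Proof. unfold B; field; lra. Qed.

Lemma iter_step_dist (n : nat) : d (it n) (it (S n)) <= alpha ^ n * a.
Proof.
  induction n as [|n IH]; simpl.
  - unfold a, it; simpl; lra.
  - change (d (f (it n)) (f (it (S n))) <= alpha * alpha ^ n * a).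
    specialize (f_contraction (it n) (it (S n))); nra.
Qed.

Lemma iter_dist (n k : nat) : d (it n) (it (n + k)%nat) <= B * alpha ^ n.
Proof.
  revert n; induction k as [|k IH]; intro n.
  - rewrite Nat.add_0_r, dist_refl.
    apply Rmult_le_pos; [apply iter_bound_nonneg | apply pow_le; lra].
  - replace (n + S k)%nat with (S n + k)%nat by lia.
    eapply Rle_trans; [apply (dist_tri _ _ (it (S n)))|].
    pose proof (iter_step_dist n); specialize (IH (S n)).
    change (alpha ^ S n) with (alpha * alpha ^ n) in IH.
    assert (0 <= alpha ^ n) by (apply pow_le; lra).
    replace (B * alpha ^ n) with (K * (alpha ^ n * a + B * (alpha * alpha ^ n)))
      by (transitivity (alpha ^ n * (K * a + K * alpha * B));
          [ring | rewrite iter_bound_fixpoint; ring]).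
    apply Rmult_le_compat_l; lra.
Qed.

Lemma iter_cauchy : qm_cauchy d it.
Proof.
  intros eps He.
  destruct (pow_mult_eventually_lt alpha B eps ltac:(pose proof alpha_lt1; lra)
              iter_bound_nonneg He) as [N HN].
  exists N; intros m n Hm Hn.
  destruct (Nat.le_ge_cases m n) as [Hmn|Hnm].
  - replace n with (m + (n - m))%nat by lia.
    eapply Rle_lt_trans; [apply iter_dist | apply HN; lia].
  - rewrite d_sym; replace m with (n + (m - n))%nat by lia.
    eapply Rle_lt_trans; [apply iter_dist | apply HN; lia].
Qed.

Section Limit.

Variable z : X.
Hypothesis iter_converges : qm_converges d it z.

Lemma iter_limit_fixed : f z = z.
Proof.
  apply d_zero, Rle_antisym; [|apply d_nonneg].
  apply Rle_plus_epsilon; intros eps He.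
  destruct (iter_converges (eps / (2 * K)) ltac:(apply Rdiv_lt_0_compat; lra)) as [N HN].
  eapply Rle_trans; [apply (dist_tri _ _ (it (S N)))|].
  pose proof (HN N (le_n _)) as HNz; pose proof (HN (S N) ltac:(lia)) as HSNz.
  rewrite d_sym in HNz.
  pose proof (f_contraction z (it N)); pose proof (d_nonneg z (it N)); pose proof alpha_lt1.
  change (it (S N)) with (f (it N)) in *.
  assert (K * (eps / (2 * K)) = eps / 2) by (field; lra).
  nra.
Qed.

Lemma iter_limit_dist (n : nat) : d z (it n) <= B * alpha ^ n.
Proof.
  apply Rle_plus_epsilon; intros eps He.
  destruct (iter_converges (eps / K) ltac:(apply Rdiv_lt_0_compat; lra)) as [N HN].
  specialize (HN (S n + N)%nat ltac:(lia)).
  rewrite d_sym.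
  eapply Rle_trans; [apply (d_quad _ _ (it (S n)) (it (S n + N)%nat))|].
  pose proof (iter_step_dist n); pose proof (iter_dist (S n) N); simpl in *.
  assert (0 <= alpha ^ n) by (apply pow_le; lra).
  assert (K * (eps / K) = eps) by (field; lra).
  replace (B * alpha ^ n + eps) with (K * (alpha ^ n * a + B * (alpha * alpha ^ n) + eps / K))
    by (rewrite <- iter_bound_fixpoint at 2; lra).
  apply Rmult_le_compat_l; lra.
Qed.

End Limit.

Lemma iter_converges_to_fixpoint :
  exists z, f z = z /\ qm_converges d it z /\ forall n, d z (it n) <= B * alpha ^ n.
Proof.
  destruct (d_complete _ iter_cauchy) as [z Hz].
  exists z; repeat split; [apply iter_limit_fixed | exact Hz | apply iter_limit_dist]; exact Hz.
Qed.

End Contraction.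

End QuasiMetric.

Theorem theorem6p2 (X : Type) (d : X -> X -> R) (K alpha : R) (f : X -> X)
  (d_nonneg : forall x y : X, 0 <= d x y)
  (d_zero : forall x y : X, d x y = 0 <-> x = y)
  (d_sym : forall x y : X, d x y = d y x)
  (HK : 1 <= K)
  (d_quad : forall x y z v : X, d x y <= K * (d x z + d z v + d v y))
  (Hcomplete : qm_complete d)
  (Hnontrivial : exists x y : X, x <> y)
  (Halpha_pos : 0 < alpha) (Halpha_lt1 : alpha < 1) (HalphaK : alpha < 1 / K)
  (Hf : forall x y : X, d (f x) (f y) <= alpha * d x y) :
  exists xs : X,
    f xs = xs /\
    (forall y : X, f y = y -> y = xs) /\
    (forall x0 : X,
        qm_converges d (fun n => Nat.iter n f x0) xs /\
        (forall n : nat,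
            d xs (Nat.iter n f x0) <= K * alpha ^ n / (1 - alpha * K) * d x0 (f x0))).
Proof.
  assert (HaK : alpha * K < 1).
  { apply Rmult_lt_compat_r with (r := K) in HalphaK; [|lra].
    unfold Rdiv in HalphaK; rewrite Rmult_1_l, Rinv_l in HalphaK by lra; exact HalphaK. }
  pose proof (iter_converges_to_fixpoint X d K d_nonneg d_zero d_sym HK d_quad Hcomplete
                alpha f Halpha_pos HaK Hf) as Hpicard.
  pose proof (contraction_fixpoint_unique X d K d_nonneg d_zero HK alpha f Halpha_pos HaK Hf)
    as Hunique.
  destruct Hnontrivial as [x _].
  destruct (Hpicard x) as [xs [Hfix _]].
  exists xs; split; [exact Hfix|]; split; [intros y Hy; exact (Hunique y xs Hy Hfix)|].
  intro x0; destruct (Hpicard x0) as [z [Hfz [Hconv Hdist]]].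
  rewrite <- (Hunique z xs Hfz Hfix).
  split; [exact Hconv|]; intro n.
  replace (K * alpha ^ n / (1 - alpha * K) * d x0 (f x0))
    with (K * d x0 (f x0) / (1 - alpha * K) * alpha ^ n) by (field; lra).
  exact (Hdist n).
Qed.
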